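(* Let $\alpha$ be a partial action datum of $M$ on $X\in\mathscr{C}$, let $\eta\colon F\to\Delta(Y)$ be a colimit of the functor $F$ associated to $\alpha$, and let $\beta$ be the global action associated to $\eta$. Then $\eta_e\colon\alpha\to\beta$ is a reflection of $\alpha$ in $\mathrm{Act}_M(\mathscr{C})$.
   Context: Standing assumptions: $M$ is a monoid with identity $e$ and $\mathscr{C}$ is a category with pullbacks. A partial action datum of $M$ on $X$ assigns to each $m\in M$ an isomorphism class of spans $[\operatorname{dom}\alpha_m,\iota_m,\alpha_m]$ with $\iota_m\colon\operatorname{dom}\alpha_m\to X$ a monomorphism and $\alpha_m\colon\operatorname{dom}\alpha_m\to X$ (isomorphism of spans: an isomorphism of apexes commuting with both legs); representatives are fixed. A global action of $M$ on $Y$ is a datum with $\beta(m)=[Y,\mathrm{id}_Y,\beta_m]$, $\beta_e=\mathrm{id}_Y$, $\beta_n\circ\beta_m=\beta_{nm}$. Given data $\alpha$ on $X$ and $\beta$ on $Y$ with representatives $[\operatorname{dom}\alpha_m,\iota_m,\alpha_m]$, $[\operatorname{dom}\beta_m,\kappa_m,\beta_m]$, a datum morphism $\alpha\to\beta$ is a morphism $f\colon X\to Y$ such that for each $m$ there is $f_m\colon\operatorname{dom}\alpha_m\to\operatorname{dom}\beta_m$ with $\kappa_m\circ f_m=f\circ\iota_m$ and $\beta_m\circ f_m=f\circ\alpha_m$. $\mathrm{Act}_M(\mathscr{C})$ is the category of global actions with datum morphisms. A reflection of $\alpha$ in $\mathrm{Act}_M(\mathscr{C})$ is a datum morphism $r\colon\alpha\to\beta$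 with $\beta$ global such that for every datum morphism $f\colon\alpha\to\gamma$ with $\gamma$ global there is a unique datum morphism $f'\colon\beta\to\gamma$ with $f'\circ r=f$. Let $I$ be the category with objects $(M\times M)\sqcup M$, with for each $(m,n)$ one morphism $(m,n)\to mn$ and one morphism $(m,n)\to m$ and no other non-identity morphisms. The functor associated to $\alpha$ is $F\colon I\to\mathscr{C}$ with $F(m,n)=\operatorname{dom}\alpha_n$, $F(m)=X$, $(m,n)\to mn\mapsto\iota_n$, $(m,n)\to m\mapsto\alpha_n$; $\Delta(Y)$ is the constant functor at $Y$. For a colimit $\eta\colon F\to\Delta(Y)$ of $F$, the global action associated to $\eta$ is $\beta(m)=[Y,\mathrm{id}_Y,\beta_m]$, where $\beta_m\colon Y\to Y$ is the unique morphism with $\beta_m\circ\eta_{(s,t)}=\eta_{(ms,t)}$ and $\beta_m\circ\eta_s=\eta_{ms}$ for all $s,t\in M$ (this is a global action). *)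

Record Category := {
  Obj :> Type;
  Hom : Obj -> Obj -> Type;
  idm : forall A, Hom A A;
  comp : forall {A B C}, Hom B C -> Hom A B -> Hom A C;
  comp_assoc : forall A B C D (h : Hom C D) (g : Hom B C) (f : Hom A B),
      comp h (comp g f) = comp (comp h g) f;
  comp_id_l : forall A B (f : Hom A B), comp (idm B) f = f;
  comp_id_r : forall A B (f : Hom A B), comp f (idm A) = f }.

Arguments Hom {c} A B.
Arguments idm {c} A.
Arguments comp {c A B C} g f.

Record Monoid := {
  mcar :> Type;
  mmul : mcar -> mcar -> mcar;
  munit : mcar;
  mmul_assoc : forall a b c, mmul a (mmul b c) = mmul (mmul a b) c;
  mmul_1l : forall a, mmul munit a = a;
  mmul_1r : forall a, mmul a munit = a }.

Arguments mmul {m} a b.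
Arguments munit {m}.

Definition is_mono {C : Category} {A B : C} (f : Hom A B) : Prop :=
  forall (Z : C) (g h : Hom Z A), comp f g = comp f h -> g = h.

Definition has_pullbacks (C : Category) : Prop :=
  forall (A B D : C) (f : Hom A D) (g : Hom B D),
    exists (P : C) (p1 : Hom P A) (p2 : Hom P B),
      comp f p1 = comp g p2 /\
      forall (Q : C) (q1 : Hom Q A) (q2 : Hom Q B), comp f q1 = comp g q2 ->
        exists u : Hom Q P, (comp p1 u = q1 /\ comp p2 u = q2) /\
          forall v : Hom Q P, comp p1 v = q1 -> comp p2 v = q2 -> v = u.

(* A partial action datum of M on X, given by its fixed representatives
   [dom α_m, ι_m, α_m], with ι_m a monomorphism. *)
Record PDatum (M : Monoid) (C : Category) (X : C) : Type := {
  pdom : M -> C;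
  piota : forall m, Hom (pdom m) X;
  palpha : forall m, Hom (pdom m) X;
  piota_mono : forall m, is_mono (piota m) }.

Arguments pdom {M C X} p m.
Arguments piota {M C X} p m.
Arguments palpha {M C X} p m.

Definition datum_of_maps {M : Monoid} {C : Category} {Y : C}
  (b : M -> Hom Y Y) : PDatum M C Y.
Proof.
  refine {| pdom := fun _ => Y; piota := fun _ => idm Y; palpha := b |}.
  intros m Z g h H. rewrite !comp_id_l in H. exact H.
Defined.

Definition is_global_action {M : Monoid} {C : Category} {Y : C}
  (b : M -> Hom Y Y) : Prop :=
  b munit = idm Y /\ forall m n : M, comp (b n) (b m) = b (mmul n m).

Definition is_datum_morphism {M : Monoid} {C : Category} {X Y : C}
  (a : PDatum M C X) (b : PDatum M C Y) (f : Hom X Y) : Prop :=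
  forall m : M, exists fm : Hom (pdom a m) (pdom b m),
    comp (piota b m) fm = comp f (piota a m) /\
    comp (palpha b m) fm = comp f (palpha a m).

Definition is_reflection {M : Monoid} {C : Category} {X Y : C}
  (a : PDatum M C X) (b : M -> Hom Y Y) (r : Hom X Y) : Prop :=
  is_global_action b /\
  is_datum_morphism a (datum_of_maps b) r /\
  forall (Z : C) (g : M -> Hom Z Z), is_global_action g ->
    forall f : Hom X Z, is_datum_morphism a (datum_of_maps g) f ->
      exists f' : Hom Y Z,
        (is_datum_morphism (datum_of_maps b) (datum_of_maps g) f' /\
         comp f' r = f) /\
        forall f'' : Hom Y Z,
          is_datum_morphism (datum_of_maps b) (datum_of_maps g) f'' ->
          comp f'' r = f -> f'' = f'.

(* The index category I: objects (M × M) ⊔ M; the non-identity morphisms are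
   (m,n) -> mn and (m,n) -> m. *)
Definition IObj (M : Monoid) : Type := ((M * M) + M)%type.

Definition Fobj {M : Monoid} {C : Category} {X : C} (a : PDatum M C X)
  (i : IObj M) : C :=
  match i with
  | inl (m, n) => pdom a n
  | inr m => X
  end.

(* η : F -> Δ(Y) is a natural transformation (cocone).  Naturality squares
   for identities are trivial; for (m,n) -> mn (F-image ι_n) and
   (m,n) -> m (F-image α_n) they read as below. *)
Definition is_cocone {M : Monoid} {C : Category} {X : C} (a : PDatum M C X)
  {Y : C} (eta : forall i : IObj M, Hom (Fobj a i) Y) : Prop :=
  forall m n : M,
    comp (eta (inr (mmul m n))) (piota a n) = eta (inl (m, n)) /\
    comp (eta (inr m)) (palpha a n) = eta (inl (m, n)).

Definition is_colimit {M : Monoid} {C : Category} {X : C} (a : PDatum M C X)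
  {Y : C} (eta : forall i : IObj M, Hom (Fobj a i) Y) : Prop :=
  is_cocone a eta /\
  forall (Z : C) (zeta : forall i : IObj M, Hom (Fobj a i) Z),
    is_cocone a zeta ->
    exists u : Hom Y Z, (forall i, comp u (eta i) = zeta i) /\
      forall v : Hom Y Z, (forall i, comp v (eta i) = zeta i) -> v = u.

Definition is_associated_action {M : Monoid} {C : Category} {X : C}
  (a : PDatum M C X) {Y : C} (eta : forall i : IObj M, Hom (Fobj a i) Y)
  (b : M -> Hom Y Y) : Prop :=
  forall m s t : M,
    comp (b m) (eta (inl (s, t))) = eta (inl (mmul m s, t)) /\
    comp (b m) (eta (inr s)) = eta (inr (mmul m s)).


(* Let η be a colimit of the functor F associated to the
   partial action datum α, and β the global action associated to η.
   1. Every cocone ζ over F is determined by its vertex components, since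
      ζ_(s,t) = ζ_s ∘ α_t; hence the vertex components η_s of the colimit
      are jointly epic.
   2. Datum morphisms into a global action γ are the maps f with
      γ_m ∘ f ∘ ι_m = f ∘ α_m; between global actions they are exactly the
      equivariant maps.
   3. Since β_m ∘ η_s = η_(ms), joint epicity shows that β is a global action,
      and η_s = β_s ∘ η_e shows that η_e is a datum morphism α → β.
   4. A datum morphism f : α → γ with γ global yields the cocone
      ζ_s = γ_s ∘ f, ζ_(s,t) = γ_s ∘ f ∘ α_t; the induced map u : Y → Z is
      the unique equivariant extension of f along η_e. *)

Section Cocones.

Variables (M : Monoid) (C : Category) (X : C) (a : PDatum M C X).

Lemma cocone_postcompose {Y Z : C} (eta : forall i : IObj M, Hom (Fobj a i) Y)
  (h : Hom Y Z) :
  is_cocone a eta -> is_cocone a (fun i => comp h (eta i)).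
Proof.
  intros Heta m n; destruct (Heta m n) as [Hiota Halpha]; split;
    rewrite <- comp_assoc; [rewrite Hiota | rewrite Halpha]; reflexivity.
Qed.

Lemma cocone_edge {Z : C} (zeta : forall i : IObj M, Hom (Fobj a i) Z) :
  is_cocone a zeta ->
  forall s t : M, zeta (inl (s, t)) = comp (zeta (inr s)) (palpha a t).
Proof. intros Hz s t; symmetry; exact (proj2 (Hz s t)). Qed.

Lemma cocone_maps_agree_on_vertices {Y Z : C}
  (eta : forall i : IObj M, Hom (Fobj a i) Y)
  (zeta : forall i : IObj M, Hom (Fobj a i) Z) (v : Hom Y Z) :
  is_cocone a eta -> is_cocone a zeta ->
  (forall s : M, comp v (eta (inr s)) = zeta (inr s)) ->
  forall i : IObj M, comp v (eta i) = zeta i.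
Proof.
  intros Heta Hzeta Hv [[s t] | s]; [| apply Hv].
  rewrite (cocone_edge eta Heta), (cocone_edge zeta Hzeta), comp_assoc, Hv.
  reflexivity.
Qed.

Lemma colimit_jointly_epic {Y Z : C} (eta : forall i : IObj M, Hom (Fobj a i) Y) :
  is_colimit a eta ->
  forall v1 v2 : Hom Y Z,
    (forall s : M, comp v1 (eta (inr s)) = comp v2 (eta (inr s))) -> v1 = v2.
Proof.
  intros [Hcocone Huniv] v1 v2 Hv.
  destruct (Huniv Z (fun i => comp v2 (eta i)) (cocone_postcompose eta v2 Hcocone))
    as [u [_ Hunique]].
  rewrite (Hunique v1), (Hunique v2); [reflexivity | reflexivity |].
  apply cocone_maps_agree_on_vertices;
    [exact Hcocone | exact (cocone_postcompose eta v2 Hcocone) | exact Hv].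
Qed.

Definition induced_cocone {Z : C} (g : M -> Hom Z Z) (f : Hom X Z) :
  forall i : IObj M, Hom (Fobj a i) Z :=
  fun i => match i as i0 return Hom (Fobj a i0) Z with
           | inl (s, t) => comp (g s) (comp f (palpha a t))
           | inr s => comp (g s) f
           end.

End Cocones.

Lemma datum_morphism_into_global {M : Monoid} {C : Category} {X Z : C}
  (a : PDatum M C X) (g : M -> Hom Z Z) (f : Hom X Z) :
  is_datum_morphism a (datum_of_maps g) f <->
  forall m : M, comp (g m) (comp f (piota a m)) = comp f (palpha a m).
Proof.
  split.
  - intros Hf m; destruct (Hf m) as [fm [Hiota Halpha]]; simpl in *.
    rewrite comp_id_l in Hiota; rewrite <- Hiota; exact Halpha.
  - intros Hf m; exists (comp f (piota a m)); simpl.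
    split; [apply comp_id_l | apply Hf].
Qed.

Lemma datum_morphism_equivariant {M : Monoid} {C : Category} {Y Z : C}
  (b : M -> Hom Y Y) (g : M -> Hom Z Z) (f : Hom Y Z) :
  is_datum_morphism (datum_of_maps b) (datum_of_maps g) f <->
  forall m : M, comp (g m) f = comp f (b m).
Proof.
  split.
  - intros Hf m; pose proof (proj1 (datum_morphism_into_global _ g f) Hf m) as H.
    simpl in H; rewrite comp_id_r in H; exact H.
  - intros Hf; apply datum_morphism_into_global; intro m; simpl.
    rewrite comp_id_r; apply Hf.
Qed.

Lemma induced_cocone_is_cocone {M : Monoid} {C : Category} {X Z : C}
  (a : PDatum M C X) (g : M -> Hom Z Z) (f : Hom X Z) :
  is_global_action g -> is_datum_morphism a (datum_of_maps g) f ->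
  is_cocone a (induced_cocone M C X a g f).
Proof.
  intros [_ Hg_mul] Hf s t; simpl; split.
  - rewrite <- Hg_mul, <- !comp_assoc.
    rewrite (proj1 (datum_morphism_into_global a g f) Hf t); reflexivity.
  - symmetry; apply comp_assoc.
Qed.

Section Reflection.

Variables (M : Monoid) (C : Category) (X : C) (a : PDatum M C X) (Y : C)
  (eta : forall i : IObj M, Hom (Fobj a i) Y).
Hypothesis Heta : is_colimit a eta.
Variable b : M -> Hom Y Y.
Hypothesis Hb : is_associated_action a eta b.

(* Vertex components
   are stated with their domain written as X (it is Fobj a (inr s) only up to
   conversion), so that they rewrite uniformly; hypotheses produced by the
   colimit are brought to this form by [cbn [Fobj]]. *)
Lemma eta_vertex_shift (m s : M) :
  @comp C X Y Y (b m) (eta (inr s)) = eta (inr (mmul m s)).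
Proof. exact (proj2 (Hb m s s)). Qed.

Lemma eta_vertex_from_unit (s : M) :
  eta (inr s) = @comp C X Y Y (b s) (eta (inr munit)).
Proof. rewrite eta_vertex_shift, mmul_1r; reflexivity. Qed.

(* β is a global action: both identities hold after composing with the
   jointly epic vertex components. *)
Lemma associated_action_global : is_global_action b.
Proof.
  split.
  - apply (colimit_jointly_epic M C X a eta Heta); intro s.
    rewrite eta_vertex_shift, mmul_1l, comp_id_l; reflexivity.
  - intros m n; apply (colimit_jointly_epic M C X a eta Heta); intro s.
    cbn [Fobj]; rewrite <- comp_assoc, !eta_vertex_shift, mmul_assoc.
    reflexivity.
Qed.

(* η_e is a datum morphism α → β: β_m ∘ η_e ∘ ι_m = η_m ∘ ι_m = η_e ∘ α_m. *)
Lemma unit_component_datum_morphism :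
  is_datum_morphism a (datum_of_maps b) (eta (inr munit)).
Proof.
  apply datum_morphism_into_global; intro m.
  rewrite comp_assoc, eta_vertex_shift, mmul_1r.
  destruct (proj1 Heta munit m) as [Hiota Halpha].
  cbn [Fobj] in Hiota, Halpha; rewrite mmul_1l in Hiota.
  rewrite Hiota, Halpha; reflexivity.
Qed.

Lemma unit_component_universal (Z : C) (g : M -> Hom Z Z) :
  is_global_action g ->
  forall f : Hom X Z, is_datum_morphism a (datum_of_maps g) f ->
    exists f' : Hom Y Z,
      (is_datum_morphism (datum_of_maps b) (datum_of_maps g) f' /\
       comp f' (eta (inr munit)) = f) /\
      forall f'' : Hom Y Z,
        is_datum_morphism (datum_of_maps b) (datum_of_maps g) f'' ->
        comp f'' (eta (inr munit)) = f -> f'' = f'.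
Proof.
  intros Hg f Hf; destruct Hg as [Hg_unit Hg_mul].
  set (zeta := induced_cocone M C X a g f).
  assert (Hzeta : is_cocone a zeta)
    by exact (induced_cocone_is_cocone a g f (conj Hg_unit Hg_mul) Hf).
  destruct (proj2 Heta Z zeta Hzeta) as [u [Hu Hunique]].
  assert (Hu_vertex : forall s : M, @comp C X Y Z u (eta (inr s)) = comp (g s) f)
    by (intro s; exact (Hu (inr s))).
  exists u; split; [split |].
  - apply datum_morphism_equivariant; intro m.
    apply (colimit_jointly_epic M C X a eta Heta); intro s.
    cbn [Fobj]; rewrite <- !comp_assoc, eta_vertex_shift, !Hu_vertex.
    rewrite comp_assoc, Hg_mul; reflexivity.
  - rewrite Hu_vertex, Hg_unit; apply comp_id_l.
  - intros f'' Hequiv Hfactor; cbn [Fobj] in Hfactor; apply Hunique.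
    apply cocone_maps_agree_on_vertices; [exact (proj1 Heta) | exact Hzeta |].
    intro s; rewrite eta_vertex_from_unit, comp_assoc.
    rewrite <- (proj1 (datum_morphism_equivariant b g f'') Hequiv s).
    rewrite <- comp_assoc, Hfactor; reflexivity.
Qed.

End Reflection.

Theorem mainTheorem8 (M : Monoid) (C : Category) (HC : has_pullbacks C)
  (X : C) (a : PDatum M C X) (Y : C)
  (eta : forall i : IObj M, Hom (Fobj a i) Y)
  (Heta : is_colimit a eta)
  (b : M -> Hom Y Y) (Hb : is_associated_action a eta b) :
  is_reflection a b (eta (inr munit)).
Proof.
  split; [| split].
  - exact (associated_action_global M C X a Y eta Heta b Hb).
  - exact (unit_component_datum_morphism M C X a Y eta Heta b Hb).
  - exact (unit_component_universal M C X a Y eta Heta b Hb).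
Qed.
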